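(* Let $Z_1,Z_2$ be independent samples from $\mathrm{GUE}(n)$. Then $\mathbb{E}[\gamma(Z_1,Z_2)]\le\sqrt{\pi/n}$.
   Context: $\mathrm{GUE}(n)$ is the distribution of $Z=(G+G^H)/\sqrt2$ where $G$ is $n\times n$ with i.i.d. complex Gaussian entries of mean $0$ and variance $1/n$. For Hermitian $A,B$, $\gamma(A,B)=\min_{\|x\|_2=1}|x^H(A+iB)x|$. *)

From HB Require Import structures.
From mathcomp Require Import all_boot all_order all_algebra.
From mathcomp Require Import all_classical all_reals all_analysis.
From mathcomp Require Import complex.
Set Implicit Arguments. Unset Strict Implicit. Unset Printing Implicit Defensive.
Import Order.TTheory GRing.Theory Num.Theory.
Local Open Scope classical_set_scope.
Local Open Scope ring_scope.
Local Open Scope complex_scope.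

Definition ctrmx (R : rcfType) (m n : nat) (A : 'M[R[i]]_(m, n)) : 'M[R[i]]_(n, m) :=
  (map_mx (fun z => z^*) A)^T.

Definition cunit_sphere (R : rcfType) (n : nat) : set 'cV[R[i]]_n :=
  [set x | \sum_(k < n) ComplexField.Normc.normc (x k ord0) ^+ 2 = 1].

(* gamma(A,B) = min_{||x||_2 = 1} |x^H (A + iB) x|  (min taken as inf; it is attained) *)
Definition gamma (R : realType) (n : nat) (A B : 'M[R[i]]_n) : R :=
  inf [set ComplexField.Normc.normc ((ctrmx x *m (A + 'i *: B) *m x) ord0 ord0) | x in @cunit_sphere R n].

Definition gue_of (R : rcfType) (n : nat) (G : 'M[R[i]]_n) : 'M[R[i]]_n :=
  ((Num.sqrt (2 : R))^-1)%:C *: (G + ctrmx G).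

Definition mutually_independent (R : realType) (d : measure_display)
    (T : measurableType d) (P : probability T R) (I : finType) (X : I -> T -> R) :=
  forall (J : {set I}) (B : I -> set R), (forall i, measurable (B i)) ->
    P (\bigcap_(i in [set i | i \in J]) (X i @^-1` B i)) =
    (\prod_(i in J) P (X i @^-1` B i))%E.

Definition entry_mx (R : realType) (d : measure_display) (T : measurableType d) (n : nat)
    (g : 'I_2 * 'I_n * 'I_n * bool -> T -> R) (k : 'I_2) (w : T) : 'M[R[i]]_n :=
  \matrix_(i, j) (g (k, i, j, false) w +i* g (k, i, j, true) w).

(* gamma(Z1, Z2) is at most |x^H (Z1 + i Z2) x| for the first basis vector x,
   that is |(Z1)_11 + i (Z2)_11|.  A diagonal entry of a GUE matrix is the real
   number sqrt 2 * Re G_11, so by the triangle inequality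
   gamma(Z1, Z2) <= sqrt 2 (|a| + |b|) with a, b ~ N(0, 1/(2n)).  Since
   E|a| = 1/sqrt(pi n), the expectation is at most sqrt(8/(pi n)), which is
   below sqrt(pi/n) because pi^2 > 8. *)

From HB Require Import structures.
From mathcomp Require Import all_boot all_order all_algebra.
From mathcomp Require Import all_classical all_reals all_analysis.
From mathcomp Require Import complex measurable_realfun.
From mathcomp Require Import ring lra zify.
Import Order.TTheory GRing.Theory Num.Theory.
Import numFieldNormedType.Exports.
Local Open Scope classical_set_scope.
Local Open Scope ring_scope.

Section complex_matrix.
Local Open Scope complex_scope.

Section quadratic_form.
Variables (R : rcfType) (n : nat).

Lemma delta_mx_cunit_sphere (i : 'I_n) :
  cunit_sphere (delta_mx i (0 : 'I_1) : 'cV[R[i]]_n).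
Proof.
rewrite /cunit_sphere /= (bigD1 i) //= big1 ?addr0 => [|k /negbTE ki].
  by rewrite !mxE !eqxx /= expr0n /= addr0 expr1n sqrtr1 expr1n.
by rewrite !mxE ki /= expr0n /= addr0 sqrtr0 expr0n.
Qed.

Lemma quad_form_delta_mx (M : 'M[R[i]]_n) (i : 'I_n) :
  (ctrmx (delta_mx i 0 : 'cV[R[i]]_n) *m M *m delta_mx i (0 : 'I_1)) 0 0 = M i i.
Proof.
have -> : ctrmx (delta_mx i 0 : 'cV[R[i]]_n) = delta_mx 0 i.
  by apply/matrixP => k j; rewrite !mxE andbC; case: (_ && _); rewrite ?conjc0 ?conjc1.
by rewrite -rowE -colE !mxE.
Qed.

End quadratic_form.

Lemma normc_le_add (R : rcfType) (a b : R) :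
  ComplexField.Normc.normc (a +i* b) <= `|a| + `|b|.
Proof.
have -> : a +i* b = (a +i* 0) + (0 +i* b) by rewrite /GRing.add /= addr0 add0r.
apply: le_trans (le_normcD _ _) _.
by rewrite /ComplexField.Normc.normc /= !expr0n /= addr0 add0r !sqrtr_sqr.
Qed.

Lemma gue_of_diag (R : rcfType) (n : nat) (G : 'M[R[i]]_n) (i : 'I_n) :
  gue_of G i i = (Num.sqrt 2 * complex.Re (G i i))%:C.
Proof.
rewrite /gue_of /ctrmx !mxE; case: (G i i) => a b /=.
have s2 : Num.sqrt (2 : R) ^+ 2 = 2 by rewrite sqr_sqrtr.
have s0 : Num.sqrt (2 : R) != 0 by rewrite sqrtr_eq0 -ltNge.
congr (_ +i* _); last by rewrite subrr mulr0 mul0r addr0.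
apply: (mulfI s0); rewrite mul0r subr0 mulrA divff // mulrA -expr2 s2; ring.
Qed.

Section gamma_bounds.
Context {R : realType} {n : nat}.
Implicit Types A B : 'M[R[i]]_n.

Lemma gamma_le_diag A B (i : 'I_n) :
  gamma A B <= ComplexField.Normc.normc (A i i + 'i * B i i).
Proof.
apply: inf_lbound.
  by exists 0 => _ [x _ <-]; case: (_ ord0 ord0) => a b; exact: sqrtr_ge0.
exists (delta_mx i 0); first exact: delta_mx_cunit_sphere.
by rewrite quad_form_delta_mx !mxE.
Qed.

Lemma gamma_ge0 (i : 'I_n) A B : 0 <= gamma A B.
Proof.
apply: lb_le_inf.
  by eexists; exists (delta_mx i 0); first exact: delta_mx_cunit_sphere.
by move=> _ [x _ <-]; case: (_ ord0 ord0) => a b; exact: sqrtr_ge0.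
Qed.

Lemma gamma_gue_le_diag (G1 G2 : 'M[R[i]]_n) (i : 'I_n) :
  gamma (gue_of G1) (gue_of G2) <=
  Num.sqrt 2 * (`|complex.Re (G1 i i)| + `|complex.Re (G2 i i)|).
Proof.
apply: le_trans (gamma_le_diag _ _ i) _.
rewrite !gue_of_diag.
have -> : forall a b : R, a%:C + 'i * b%:C = a +i* b.
  by move=> a b; simpc.
apply: le_trans; first exact: normc_le_add.
by rewrite !normrM ger0_norm ?sqrtr_ge0 // mulrDr.
Qed.

End gamma_bounds.

End complex_matrix.

(* No measurability is required: [gamma] is not known to be measurable. *)
Lemma ge0_le_integralT d (T : measurableType d) (R : realType)
    (mu : {measure set T -> \bar R}) (f1 f2 : T -> \bar R) :
    (forall x, (0 <= f1 x)%E) -> (forall x, (f1 x <= f2 x)%E) ->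
  (\int[mu]_x f1 x <= \int[mu]_x f2 x)%E.
Proof.
move=> f1_ge0 f12; have f2_ge0 x := le_trans (f1_ge0 x) (f12 x).
rewrite !ge0_integralTE //.
apply: le_ereal_sup => _ [h hf1 <-].
by exists h => //= x; exact: le_trans (hf1 x) (f12 x).
Qed.

Section density.
Local Open Scope ereal_scope.
Context d (T : measurableType d) (R : realType).
Variables (nu : {finite_measure set T -> \bar R})
          (mu : {sigma_finite_measure set T -> \bar R}) (p : T -> R).
Hypothesis p_meas : measurable_fun setT p.
Hypothesis nuE : forall A, measurable A -> nu A = \int[mu]_(x in A) (p x)%:E.

Lemma density_dominates : nu `<< mu.
Proof.
apply/null_content_dominatesP => A mA muA0; rewrite nuE//.
apply: null_set_integral => //.
by apply/measurable_EFinP; exact: measurable_funTS.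
Qed.

Lemma ge0_integral_density (f : T -> \bar R) : (forall x, 0 <= f x) ->
    measurable_fun setT f ->
  \int[mu]_x (f x * (p x)%:E) = \int[nu]_x f x.
Proof.
move=> f0 mf; have numu := density_dominates.
rewrite -(Radon_Nikodym_SigmaFinite.change_of_variables numu)//.
apply: ae_eq_integral => //.
- by apply: emeasurable_funM => //; exact/measurable_EFinP.
- apply: emeasurable_funM => //; apply: measurable_int.
  exact: Radon_Nikodym_SigmaFinite.f_integrable.
apply/ae_eqe_mul2l/ae_eq_sym; apply: integral_ae_eq => //.
- exact: Radon_Nikodym_SigmaFinite.f_integrable.
- exact/measurable_EFinP.
by move=> A _ mA; rewrite -Radon_Nikodym_SigmaFinite.f_integral// nuE.
Qed.

End density.

Lemma is_derive_normal_fun (R : realType) (s x : R) : s != 0 ->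
  is_derive x 1 (fun y => - s ^+ 2 * normal_fun 0 s y) (x * normal_fun 0 s x).
Proof.
move=> s0; rewrite /normal_fun.
apply: trigger_derive.
by rewrite /GRing.scale /= !subr0 mulr0 add0r mulr1 -mulr2n; field.
Qed.

Lemma integral0y_mul_normal_fun (R : realType) (s : R) : s != 0 ->
  (\int[lebesgue_measure]_(x in `[0%R, +oo[) (x * normal_fun 0 s x)%:E = (s ^+ 2)%:E)%E.
Proof.
move=> s0; pose F y := - s ^+ 2 * normal_fun 0 s y.
have dF (x : R) : is_derive x 1 F (x * normal_fun 0 s x) by exact: is_derive_normal_fun.
have cF (x : R) : {for x, continuous F}.
  by apply: differentiable_continuous; apply/derivable1_diffP; have [] := dF x.
have k0 : 0 < s ^+ 2 *+ 2 by rewrite pmulrn_lgt0 // exprn_even_gt0.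
have nfE y : normal_fun 0 s y = expR (- (y ^+ 2 * (s ^+ 2 *+ 2)^-1)).
  by rewrite /normal_fun subr0 mulNr.
have cN (y : R) : {for y, continuous (normal_fun 0 s)}.
  by apply: differentiable_continuous; apply/derivable1_diffP; exact: ex_derive.
rewrite (@ge0_continuous_FTC2y _ _ F 0 0).
- by rewrite /F nfE expr0n mul0r oppr0 expR0 mulr1 -EFinB sub0r opprK.
- by move=> x x0; rewrite mulr_ge0 // normal_fun_ge0.
- by apply: continuous_subspaceT => x; apply: cvgM; [exact: cvg_id|exact: cN].
- rewrite -(mulr0 (- s ^+ 2)); apply: cvgMr.
  have -> : normal_fun 0 s = (fun z => expR (- z)) \o (fun y => y ^+ 2 / (s ^+ 2 *+ 2)).
    by apply/funext => y; rewrite nfE.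
  apply: (@cvg_comp _ _ _ _ _ _ (pinfty_nbhs R)); last exact: cvgr_expR.
  apply: gt0_cvgMly; last exact: cvgr_expr2.
  by rewrite invr_gt0.
- by move=> x _; have [] := dF x.
- exact/cvg_at_right_filter/cF.
- by move=> x _; rewrite derive1E; have [_ ->] := dF x.
Qed.

Lemma normal_prob_integral_abs (R : realType) (s : R) : s != 0 ->
  (\int[normal_prob 0 s]_y (`|y|)%:E = (2 * normal_peak s * s ^+ 2)%:E)%E.
Proof.
move=> s0.
rewrite -(@ge0_integral_density _ _ _ (normal_prob 0 s) lebesgue_measure _
  (measurable_normal_pdf 0 s)) //; last first.
  by apply/measurable_EFinP; exact: normr_measurable.
under eq_integral do rewrite -EFinM.
rewrite ge0_symfun_integralT; last 3 first.
- by move=> x; rewrite mulr_ge0 // normal_pdf_ge0.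
- by move=> x; apply: cvgM; [exact: norm_continuous|exact: continuous_normal_pdf].
- by move=> x; rewrite /= normrN normal_pdfE // /normal_fun !subr0 sqrrN.
rewrite normal_pdfE //.
rewrite -set_itvcy.
under eq_integral => x.
  rewrite inE /= in_itv /= andbT => x0.
  rewrite ger0_norm // mulrCA EFinM.
  over.
rewrite ge0_integralZl //; last 3 first.
- apply/measurable_EFinP; apply: measurable_funM; first exact: measurable_id.
  by apply: measurable_funTS; exact: measurable_normal_fun.
- move=> x; rewrite /= in_itv /= andbT => x0.
  by rewrite lee_fin mulr_ge0 // normal_fun_ge0.
- by rewrite lee_fin normal_peak_ge0.
by rewrite integral0y_mul_normal_fun // -!EFinM mulrA.
Qed.

Lemma ge0_integral_law {d} {T : measurableType d} {R : realType}
    {P : {measure set T -> \bar R}} {mu : {measure set (measurableTypeR R) -> \bar R}}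
    {X : T -> measurableTypeR R} (f : measurableTypeR R -> \bar R) :
  measurable_fun setT X -> (forall A, measurable A -> P (X @^-1` A) = mu A) ->
  measurable_fun setT f -> (forall y, (0 <= f y)%E) ->
  (\int[P]_w f (X w) = \int[mu]_y f y)%E.
Proof.
move=> mX lawX mf f0.
transitivity (\int[pushforward P X]_y f y)%E.
  by rewrite (ge0_integral_pushforward mX) //; move=> y _; exact: f0.
by apply: eq_measure_integral => A mA _; exact: lawX.
Qed.

Lemma ltr_exp_div_factSS (R : realFieldType) (x : R) (m : nat) : 0 < x ->
    x ^+ 2 < (m.+2 * m.+1)%:R ->
  x ^+ m.+2 / (m.+2)`!%:R < x ^+ m / m`!%:R.
Proof.
move=> x0 hx; have mf : (0 : R) < m`!%:R by rewrite ltr0n fact_gt0.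
have -> : x ^+ m.+2 / (m.+2)`!%:R = x ^+ m / m`!%:R * (x ^+ 2 / (m.+2 * m.+1)%:R).
  by rewrite factS factS mulnA [in LHS]natrM -addn2 exprD invfM [_^-1 / _]mulrC mulrACA.
rewrite gtr_pMr ?divr_gt0 ?exprn_gt0 //.
by rewrite ltr_pdivrMr ?mul1r // ltr0n muln_gt0.
Qed.

Lemma cos_3half_gt0 (R : realType) : 0 < cos (3 / 2 : R).
Proof.
have h := @cvg_cos_coeff' R (3 / 2); rewrite -(cvg_lim (@Rhausdorff R) h).
apply: (@lt_trans _ _ (\sum_(0 <= i < 4) cos_coeff' (3 / 2 : R) i)).
  rewrite !big_nat_recr //= big_nil add0r /cos_coeff' -!exprnP /=.
  rewrite !factS fact0 /= !natrM !expr0 !expr1 !exprS !expr0 /=.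
  lra.
apply: lt_sum_lim_series; first by move/cvgP in h.
move=> k; have odd_k : odd (4 + k.*2) = false by rewrite oddD odd_double.
rewrite /cos_coeff' -!exprnP addnS -(signr_odd _ (4 + k.*2)).
rewrite -(signr_odd _ (4 + k.*2).+1) oddS odd_k expr0 expr1 mul1r mulN1r.
rewrite mulNr subr_gt0 doubleS ltr_exp_div_factSS ?divr_gt0 //.
apply: (@lt_le_trans _ _ 3); first lra.
by rewrite ler_nat; lia.
Qed.

Lemma pi_gt3 (R : realType) : (3 : R) < pi.
Proof.
have pi_ge2 := @pi_ge2 R; rewrite ltNge; apply/negP => pi_le3.
have : cos (3 / 2 : R) <= cos (pi / 2).
  have : pi / 2 <= 3 / 2 :> R by lra.
  rewrite le_eqVlt => /predU1P[-> //|lt_pihalf].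
  by rewrite ltW // ltr_cos // in_itv /=; apply/andP; split; lra.
by rewrite cos_pihalf leNgt cos_3half_gt0.
Qed.

Lemma normal_abs_mean_le (R : realType) (n : nat) (s : R) : (0 < n)%N ->
    s ^+ 2 = (2 * n%:R)^-1 ->
  Num.sqrt 2 * (2 * normal_peak s * s ^+ 2 *+ 2) <= Num.sqrt (pi / n%:R).
Proof.
move=> n_gt0 s2; have n0 : (0 : R) < n%:R by rewrite ltr0n.
have pi3 := pi_gt3 R.
set p := normal_peak s; set r := Num.sqrt (2 : R).
have p2 : p ^+ 2 = (s ^+ 2 * pi *+ 2)^-1.
  by rewrite exprVn sqr_sqrtr // mulrn_wge0 // mulr_ge0 ?sqr_ge0 ?pi_ge0.
have r2 : r ^+ 2 = 2 by rewrite sqr_sqrtr.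
have lhs_ge0 : 0 <= r * (2 * p * s ^+ 2 *+ 2).
  rewrite mulr_ge0 ?sqrtr_ge0 // mulrn_wge0 // mulr_ge0 ?sqr_ge0 //.
  by rewrite mulr_ge0 // normal_peak_ge0.
rewrite -(ger0_norm lhs_ge0) -sqrtr_sqr ler_sqrt ?divr_ge0 ?pi_ge0 ?ler0n //.
have -> : (r * (2 * p * s ^+ 2 *+ 2)) ^+ 2 = r ^+ 2 * p ^+ 2 * (s ^+ 2) ^+ 2 * 16.
  by ring.
rewrite r2 p2 s2.
(* [field] would unfold [pi], whose definition is a [_ *+ 2] *)
set q := pi in pi3 *; clearbody q.
have q0 : q != 0 by rewrite gt_eqF //; lra.
have -> : 2 / ((2 * n%:R)^-1 * q *+ 2) * (2 * n%:R)^-1 ^+ 2 * 16 = 8 / (n%:R * q).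
  by field; rewrite q0 gt_eqF.
rewrite ler_pdivrMr ?mulr_gt0 //; last lra.
have -> : q / n%:R * (n%:R * q) = q ^+ 2 by field; rewrite gt_eqF.
nra.
Qed.

Theorem corollary3p13 (R : realType) (d : measure_display) (T : measurableType d)
  (P : probability T R) (n : nat) (n_gt0 : (0 < n)%N)
  (g : 'I_2 * 'I_n * 'I_n * bool -> T -> R)
  (g_meas : forall p, measurable_fun setT (g p))
  (g_law : forall p (A : set R), measurable A ->
     P (g p @^-1` A) = normal_prob 0 (Num.sqrt ((2 * n)%:R^-1)) A)
  (g_indep : mutually_independent P g) :
  (\int[P]_w (gamma (gue_of (entry_mx g 0 w)) (gue_of (entry_mx g 1 w)))%:E
     <= (Num.sqrt (pi / n%:R))%:E)%E.
Proof.
pose i := Ordinal n_gt0; pose s := Num.sqrt ((2 * n)%:R^-1 : R).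
have s2 : s ^+ 2 = (2 * n%:R)^-1 by rewrite sqr_sqrtr ?natrM // invr_ge0 ler0n.
have s0 : s != 0 by rewrite -sqrf_eq0 s2 invr_eq0 mulf_neq0 // pnatr_eq0 -lt0n.
have abs_meas p : measurable_fun setT (fun w => (`|g p w|)%:E).
  by apply/measurable_EFinP; apply: measurableT_comp => //; exact: normr_measurable.
have abs_mean p : (\int[P]_w (`|g p w|)%:E = (2 * normal_peak s * s ^+ 2)%:E)%E.
  rewrite (ge0_integral_law (fun y => (`|y|)%:E) (g_meas p) (g_law p)) //.
    exact: normal_prob_integral_abs.
  by apply/measurable_EFinP; exact: normr_measurable.
apply: (@le_trans _ _ (\int[P]_w
    (Num.sqrt 2 * (`|g (0, i, i, false) w| + `|g (1, i, i, false) w|))%:E)%E).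
  apply: ge0_le_integralT => w; rewrite lee_fin; first exact: (gamma_ge0 i).
  by have := gamma_gue_le_diag (entry_mx g 0 w) (entry_mx g 1 w) i; rewrite !mxE.
under eq_integral do rewrite EFinM EFinD.
rewrite ge0_integralZl ?ge0_integralD ?abs_mean -?EFinD -?EFinM ?lee_fin //.
- by rewrite -mulr2n; exact: normal_abs_mean_le.
- by apply: emeasurable_funD; exact: abs_meas.
- by move=> w _; rewrite -EFinD lee_fin addr_ge0.
Qed.
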